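(* Let $X$ be a real normed linear space with zero $\theta$, $\dim X>1$, whose norm is strictly convex. Let $f\colon X\to X$ be a motion such that there exists $x\in X$ with $\|f(x)\|\leqslant\|x\|$ and $\|f(-x)\|\leqslant\|x\|$. Then the shift component of $f$ is trivial, i.e. $f(\theta)=\theta$.
   Context: A motion of $X$ is a surjective map $f\colon X\to X$ with $\|f(x)-f(y)\|=\|x-y\|$ for all $x,y$. Every motion decomposes uniquely as $f=h\circ g$ with $g$ a motion fixing $\theta$ and $h(x)=x+a$ a translation (here $a=f(\theta)$); $h$ is called the shift component, and it is trivial when $h$ is the identity, i.e. $a=\theta$. The norm is strictly convex if for all $x\ne y$ with $\|x\|=\|y\|=1$ and all $\lambda\in(0,1)$ one has $\|\lambda x+(1-\lambda)y\|<1$. *)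

From HB Require Import structures.
From mathcomp Require Import all_boot all_order all_algebra.
From mathcomp Require Import all_classical all_reals.
From mathcomp Require Import topology normedtype.
Set Implicit Arguments. Unset Strict Implicit. Unset Printing Implicit Defensive.
Import Order.TTheory GRing.Theory Num.Theory.
Local Open Scope ring_scope.

Definition dim_gt1 (R : realType) (X : normedModType R) : Prop :=
  exists u v : X, forall a b : R, a *: u + b *: v = 0 -> a = 0 /\ b = 0.

Definition strictly_convex (R : realType) (X : normedModType R) : Prop :=
  forall x y : X, x != y -> `|x| = 1 -> `|y| = 1 ->
    forall l : R, 0 < l < 1 -> `|l *: x + (1 - l) *: y| < 1.

Definition motion (R : realType) (X : normedModType R) (f : X -> X) : Prop :=
  (forall y : X, exists x : X, f x = y) /\
  (forall x y : X, `|f x - f y| = `|x - y|).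

(* Shift component h(x) = x + f(0) is trivial iff f(0) = 0. *)
Definition shift_trivial (R : realType) (X : normedModType R) (f : X -> X) : Prop :=
  f 0 = 0.

(** Strict convexity makes the equality case of the triangle inequality rigid:
    two vectors of equal norm whose sum has twice that norm coincide.  With
    [r = |x|], the images [f x] and [f (-x)] lie in the ball of radius [r]
    but are [2r] apart, so they are antipodal on the sphere of radius [r];
    and [f 0], being at distance [r] from both, is their midpoint [0]. *)

From HB Require Import structures.
From mathcomp Require Import all_boot all_order all_algebra.
From mathcomp Require Import all_classical all_reals.
From mathcomp Require Import topology normedtype.
From mathcomp Require Import ring lra.
Set Implicit Arguments. Unset Strict Implicit. Unset Printing Implicit Defensive.
Import Order.TTheory GRing.Theory Num.Theory.
Local Open Scope ring_scope.

Section StrictlyConvex.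
Variables (R : realType) (X : normedModType R).
Hypothesis convX : strictly_convex X.

Lemma norm_add_eq_eq (u v : X) :
  `|u| = `|v| -> `|u + v| = `|u| + `|v| -> u = v.
Proof.
move=> uv huv; set r := `|u| in uv huv.
have [r0|r_gt0] := eqVneq r 0.
  by move: uv; rewrite r0 => /esym/normr0_eq0 ->; apply/normr0_eq0.
have {}r_gt0 : 0 < r by rewrite lt_def r_gt0 normr_ge0.
apply/eqP/negPn/negP => neq_uv.
have neq_uv' : r^-1 *: u != r^-1 *: v.
  by apply: contra neq_uv => /eqP/scalerI -> //; rewrite invr_eq0 gt_eqF.
have normV (w : X) : `|w| = r -> `|r^-1 *: w| = 1.
  by move=> hw; rewrite normrZ hw gtr0_norm ?invr_gt0 // mulVf ?gt_eqF.
have half01 : 0 < (2^-1 : R) < 1 by rewrite invr_gt0 ltr0n invf_lt1 ?ltr1n.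
have := convX neq_uv' (normV _ erefl) (normV _ (esym uv)) half01.
have -> : (1 - 2^-1 : R) = 2^-1 by field.
rewrite !scalerA -scalerDr normrZ huv -uv gtr0_norm ?mulr_gt0 ?invr_gt0 //.
have -> : 2^-1 * r^-1 * (r + r) = 1 by field; exact: lt0r_neq0.
by rewrite ltxx.
Qed.

Lemma antipodal_of_dist (p q : X) (r : R) :
  `|p| <= r -> `|q| <= r -> `|p - q| = r *+ 2 -> q = - p.
Proof.
move=> hp hq hpq; have := ler_normB p q; rewrite hpq mulr2n => tri.
have hp' : `|p| = r by lra.
have hq' : `|q| = r by lra.
suff -> : p = - q by rewrite opprK.
by apply: norm_add_eq_eq; rewrite normrN ?hpq hp' hq' ?mulr2n.
Qed.

Lemma midpoint_of_dist (p a q : X) (r : R) :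
  `|a - p| = r -> `|q - a| = r -> `|q - p| = r *+ 2 -> a - p = q - a.
Proof.
move=> hap hqa hqp; apply: norm_add_eq_eq; first by rewrite hap hqa.
by rewrite addrC addrA subrK hqp hap hqa mulr2n.
Qed.

End StrictlyConvex.

Theorem lemma4 (R : realType) (X : normedModType R) (f : X -> X) :
  dim_gt1 X -> strictly_convex X -> motion f ->
  (exists x : X, `|f x| <= `|x| /\ `|f (- x)| <= `|x|) ->
  shift_trivial f.
Proof.
move=> _ convX [_ isof] [x [hfx hfNx]].
have dist2x : `|x - - x| = `|x| *+ 2 by rewrite opprK -mulr2n normrMn.
have antipodal : f (- x) = - f x.
  by apply: (antipodal_of_dist convX hfx hfNx); rewrite isof.
have midpoint : f 0 - f x = f (- x) - f 0.
  apply: (midpoint_of_dist convX (r := `|x|)).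
  - by rewrite isof sub0r normrN.
  - by rewrite isof subr0 normrN.
  - by rewrite isof -opprB normrN.
move/eqP: midpoint; rewrite antipodal subr_eq addrAC addNr sub0r -subr_eq0 opprK.
by rewrite -mulr2n -normr_eq0 normrMn mulrn_eq0 normr_eq0 => /eqP.
Qed.
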